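(* Let $G$ be an internally 3-connected graph containing two nontrivial fans $F_1,F_2$ (fans of $G$). If $F_1$ and $F_2$ have a common interior vertex, then they have the same center.
   Context: Graphs are finite and simple. A graph is internally 3-connected if it is obtained from a 3-connected graph by subdividing each edge at most once. Type-I graphs: let $H$ have a specified Hamiltonian cycle $C$; edges not in $C$ are chords; non-incident chords $ab,cd$ cross if $a,c,b,d$ occur in this cyclic order on $C$. $H$ is type-I if every chord crosses at most one other chord and, whenever chords $ab,cd$ cross, either both $ac,bd\in E(C)$ or both $ad,bc\in E(C)$. A fan: a type-I graph $H$ with reference cycle $C$ and two edges $ab,ad$ of $C$ sharing the end $a$ such that every chord joins $a$ to the path $C\setminus a$; its corners are $a,b,d$, its center is $a$, its length is its number of chords; it is nontrivial if its length is at least $2$. A fan of $G$: $J\subseteq G$ is a fan of $G$ if $G$ is obtained from a graph $H'$ by adding the fan $J$, i.e. identifying the corners of $J$ with distinct vertices of $H'$, where $J,H'$ are regarded as subgraphs of $G$ with $V(J\cap H')$ equal to the set $Z$ of corners of $J$ (so every edge of $G$ incident with a vertex of $J\setminus Z$ lies in $J$). Vertices of $J\setminus Z$ are interior vertices of $J$. *)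

(* Graphs are finite simple graphs whose vertices live in a
   finType T; a (sub)graph is a vertex set V : {set T} with an edge relation. *)
From mathcomp Require Import all_boot.
Set Implicit Arguments. Unset Strict Implicit. Unset Printing Implicit Defensive.

Section Graphs.
Variable T : finType.

Definition graph_wf (V : {set T}) (E : rel T) : Prop :=
  symmetric E /\ irreflexive E /\ (forall x y, E x y -> x \in V).

Definition three_connected (B : {set T}) (h : rel T) : Prop :=
  3 < #|B| /\
  forall S : {set T}, #|S| <= 2 ->
    forall x y, x \in B :\: S -> y \in B :\: S ->
      connect [rel u v | [&& h u v, u \notin S & v \notin S]] x y.

Definition nbhd (e : rel T) (w : T) : {set T} := [set u | e w u].

Definition subdivides_at_most_once (e : rel T) (B : {set T}) (h : rel T) : Prop :=
  (forall x y, x \in B -> y \in B -> e x y -> h x y) /\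
  (* every vertex outside B subdivides an edge uv of H (which is then absent in G) *)
  (forall w, w \notin B -> exists u v,
      [/\ u \in B, v \in B, h u v, ~~ e u v & nbhd e w = [set u; v]]) /\
  (* every edge of H is either kept or subdivided *)
  (forall u v, h u v -> ~~ e u v ->
      exists w, w \notin B /\ nbhd e w = [set u; v]) /\
  (* at most once *)
  (forall w w', w \notin B -> w' \notin B -> nbhd e w = nbhd e w' -> w = w').

Definition internally_3_connected (e : rel T) : Prop :=
  exists (B : {set T}) (h : rel T),
    [/\ graph_wf B h, three_connected B h & subdivides_at_most_once e B h].

(* Reference cycle, given as a duplicate-free sequence c read cyclically. *)
Definition cedge (c : seq T) (x y : T) : bool :=
  [&& x \in c, y \in c & (y == next c x) || (x == next c y)].

Definition ham_cycle (VJ : {set T}) (eJ : rel T) (c : seq T) : Prop :=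
  [/\ uniq c, 2 < size c, (forall x, (x \in c) = (x \in VJ))
    & all (fun x => eJ x (next c x)) c].

Definition chord (eJ : rel T) (c : seq T) (x y : T) : bool :=
  eJ x y && ~~ cedge c x y.

Definition cyc_order4 (c : seq T) (x1 x2 x3 x4 : T) : bool :=
  [&& x1 \in c, x2 \in c, x3 \in c, x4 \in c &
   [exists i : 'I_(size c),
      let s := rot i c in
      [&& index x1 s < index x2 s, index x2 s < index x3 s
        & index x3 s < index x4 s]]].

Definition crossing (eJ : rel T) (c : seq T) (a b x y : T) : bool :=
  [&& chord eJ c a b, chord eJ c x y, uniq [:: a; b; x; y]
    & cyc_order4 c a x b y].

Definition type_I (VJ : {set T}) (eJ : rel T) (c : seq T) : Prop :=
  ham_cycle VJ eJ c /\
  (* every chord crosses at most one other chord *)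
  (forall a b x y x' y', crossing eJ c a b x y -> crossing eJ c a b x' y' ->
      [set x; y] = [set x'; y']) /\
  (forall a b x y, crossing eJ c a b x y ->
      (cedge c a x && cedge c b y) || (cedge c a y && cedge c b x)).

(* (VJ, eJ) with reference cycle c is a fan with center a; its other two
   corners are the cycle neighbours next c a and prev c a. *)
Definition is_fan (VJ : {set T}) (eJ : rel T) (c : seq T) (a : T) : Prop :=
  type_I VJ eJ c /\ a \in c /\
  (forall x y, chord eJ c x y -> (x == a) || (y == a)).

Definition corners (c : seq T) (a : T) : {set T} := [set a; next c a; prev c a].

Definition interior (VJ : {set T}) (c : seq T) (a : T) : {set T} :=
  VJ :\: corners c a.

Definition fan_length (eJ : rel T) (c : seq T) : nat :=
  #|[set [set p.1; p.2] | p in [set p : T * T | chord eJ c p.1 p.2]]|.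

(* (VJ, eJ) (with cycle c and center a) is a fan of G = (T, e):
   G is obtained from some graph H' = (VH, eH) by adding the fan, with
   V(J) ∩ V(H') the set of corners. *)
Definition fan_of (e : rel T) (VJ : {set T}) (eJ : rel T) (c : seq T) (a : T) : Prop :=
  [/\ graph_wf VJ eJ, is_fan VJ eJ c a &
   exists (VH : {set T}) (eH : rel T),
     [/\ graph_wf VH eH, VJ :&: VH = corners c a, VJ :|: VH = [set: T]
       & forall x y, e x y = eJ x y || eH x y]].

Definition nontrivial_fan_of (e : rel T) (VJ : {set T}) (eJ : rel T) (c : seq T) (a : T) : Prop :=
  fan_of e VJ eJ c a /\ 2 <= fan_length eJ c.

End Graphs.

From mathcomp Require Import all_boot.
Set Implicit Arguments. Unset Strict Implicit. Unset Printing Implicit Defensive.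

(* Every vertex interior to a fan is adjacent in G only to its two cycle
   neighbours and to the center.  Hence the center a1 of F1, which has the two
   corners and at least two chord ends as neighbours, is not interior to F2.
   If a1 <> a2, a common interior vertex of F1 and F2 is adjacent to a1
   whenever it is adjacent to a2, and a vertex interior to F2 but not to F1 is
   a corner of F1, hence adjacent to a1 too.  Walking along the interior path
   of F2 one sees that every chord end z of F2 is thus adjacent to a1, which
   forces z to be the cycle neighbour of the corner a1 of F2 other than a2:
   the two chords of F2 would share their end. *)

Lemma next_neq_prev (T : eqType) (c : seq T) x : uniq c -> 2 < size c -> x \in c ->
  next c x != prev c x.
Proof.
move=> uc sc /rot_to[i s hr]; rewrite -(next_rot i uc) -(prev_rot i uc) hr.
rewrite -(size_rot i) hr in sc; rewrite -(rot_uniq i) hr in uc.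
case: s {hr} uc sc => [|y [|y' s]] // /andP[xN /andP[yN _]] _.
rewrite prev_nth mem_head (memNindex xN) -[size _]/(size [:: x, y, y' & s]).-1 nth_last /=.
by rewrite eqxx; apply: contraNneq yN => ->; apply: mem_last.
Qed.

Definition at_end (T : eqType) (p : seq T) (x : T) : bool :=
  (x == head x p) || (x == last x p).

Section ExitPoint.
Variables (T : eqType) (r : rel T) (P : pred T) (w : T).
Hypothesis r_sym : symmetric r.
Hypothesis exit_at_w : forall x y, r x y -> P x -> ~~ P y -> y = w.

(* The path may meet w only at its end, unless w is in P and cannot be
   reached at all. *)
Lemma path_exit_at x p : path r x p -> P x -> (~~ P w -> w \notin belast x p) ->
  {in x :: p, forall z, ~~ P z -> z = w}.
Proof.
elim: p x => [|y p IHp] x /= => [_ Px _ z|/andP[rxy ryp] Px hw z].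
  by rewrite inE => /eqP->; rewrite Px.
have [Py|nPy] := boolP (P y).
  rewrite inE => /predU1P[->|]; first by rewrite Px.
  by apply: IHp => // /hw; rewrite inE negb_or => /andP[].
have yw := exit_at_w rxy Px nPy.
case: p {IHp} ryp hw => [|y' p] _ hw.
  by rewrite !inE => /predU1P[->|/eqP->]; rewrite ?Px.
by move: nPy; rewrite yw => /hw; rewrite /= -yw !inE eqxx orbT.
Qed.

Lemma sorted_rev_sym p : sorted r (rev p) = sorted r p.
Proof. by rewrite rev_sorted; apply: eq_sorted => x y; rewrite r_sym. Qed.

Lemma sorted_exit_at p : uniq p -> sorted r p -> has P p -> (w \in p -> at_end p w) ->
  {in p, forall z, ~~ P z -> z = w}.
Proof.
wlog w_last : p / w \in p -> w = last w p.
  move=> wlog_last up sp hP w_end.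
  have [wp|wNp] := boolP (w \in p); last by apply: wlog_last; rewrite ?(negbTE wNp).
  case/orP: (w_end wp) => /eqP w_head; first last.
    by apply: wlog_last.
  have w_last_rev : w = last w (rev p).
    by case: (p) w_head => // x q; rewrite rev_cons last_rcons.
  move=> z zp; apply: (wlog_last (rev p)) => //;
    rewrite ?rev_uniq ?sorted_rev_sym ?has_rev ?mem_rev //.
  by rewrite /at_end -w_last_rev eqxx orbT.
move=> up sp /hasP[v vp Pv] _.
case/splitPr: vp up sp w_last => p1 p2.
rewrite cat_uniq sorted_cat_cons mem_cat => /and3P[_ p1_p2 up2] /andP[sp1 sp2] w_last z.
have w_last2 : w \in v :: p2 -> w = last v p2.
  by move=> wp2; rewrite [LHS]w_last ?wp2 ?orbT // last_cat.
rewrite mem_cat -mem_rev orbC => /orP[]; first apply: path_exit_at => // _.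
  apply/negP => /[dup] /mem_belast /w_last2 {1}->; move: up2.
  by rewrite lastI rcons_uniq => /andP[/negP].
move=> zp1; apply: (@path_exit_at v (rev p1)); rewrite ?inE ?zp1 ?orbT //.
  by rewrite -sorted_rev_sym rev_rcons in sp1.
move=> nPw; apply/negP => /mem_belast; rewrite inE mem_rev => /predU1P[wv|wp1].
  by rewrite wv Pv in nPw.
case/hasP: p1_p2; exists w => //.
by rewrite [X in X \in _]w_last ?wp1 // last_cat; exact: (mem_last v p2).
Qed.

End ExitPoint.

Definition corner_inner_nb (T : eqType) (c : seq T) (a w : T) : T :=
  if w == next c a then next c w else prev c w.

Section Fan.
Variables (T : finType) (e : rel T) (V : {set T}) (eJ : rel T) (c : seq T) (a : T).
Hypothesis hF : fan_of e V eJ c a.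

Lemma fan_uniq : uniq c. Proof. by case: hF => _ [[[]]]. Qed.
Lemma fan_size : 2 < size c. Proof. by case: hF => _ [[[]]]. Qed.
Lemma fan_center : a \in c. Proof. by case: hF => _ [_ []]. Qed.

Lemma mem_interior x :
  (x \in interior V c a) = [&& x \in c, x != a, x != next c a & x != prev c a].
Proof.
case: hF => _ [[[_ _ memV _] _] _] _.
by rewrite /interior /corners in_setD !inE -memV andbC !negb_or -!andbA.
Qed.

Lemma fan_adj_next x : x \in c -> e x (next c x).
Proof.
by case: hF => _ [[[_ _ _ /allP adjJ] _] _] [VH [eH [_ _ _ ->]]] /adjJ ->.
Qed.

Lemma fan_adj_prev x : x \in c -> e x (prev c x).
Proof.
case: hF => [[symJ _] [[[_ _ _ /allP adjJ] _] _] [VH [eH [_ _ _ ->]]]] xc.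
have := adjJ (prev c x); rewrite mem_prev next_prev ?fan_uniq // => /(_ xc).
by rewrite symJ => ->.
Qed.

Lemma interior_adj x y : x \in interior V c a -> e x y -> y \in [:: next c x; prev c x; a].
Proof.
case: hF => [[symJ [_ VJ]] [_ [_ chordP]] [VH [eH [[_ [_ VH_e]] cap _ eE]]]] xI.
rewrite eE => /orP[xyJ | xyH]; last first.
  move: xI; rewrite /interior inE => /andP[xNcorner xV].
  have : x \in V :&: VH by rewrite inE xV (VH_e _ _ xyH).
  by rewrite cap (negbTE xNcorner).
have [/and3P[_ _ /orP[/eqP-> | /eqP->]] | xyNC] := boolP (cedge c x y).
- by rewrite mem_head.
- by rewrite prev_next ?fan_uniq // !inE eqxx orbT.
have /chordP/orP[/eqP xa | /eqP->] : chord eJ c x y by rewrite /chord xyJ xyNC.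
  by move: xI; rewrite mem_interior xa eqxx andbF.
by rewrite !inE eqxx !orbT.
Qed.

Lemma interior_mem x : x \in interior V c a -> x \in c.
Proof. by rewrite mem_interior => /andP[]. Qed.

Lemma interior_adj_mem x y : x \in interior V c a -> e x y -> y \in c.
Proof.
move=> xI /(interior_adj xI); rewrite !inE => /or3P[] /eqP->;
  by rewrite ?mem_next ?mem_prev ?(interior_mem xI) ?fan_center.
Qed.

Lemma interior_nb_uniq x : x \in interior V c a -> uniq [:: next c x; prev c x; a].
Proof.
move=> xI; have := xI; rewrite mem_interior => /and4P[xc xa xNn xNp].
rewrite /= !inE negb_or next_neq_prev ?fan_uniq ?fan_size //= andbT.
apply/andP; split.
  by apply: contra xNp => /eqP <-; rewrite prev_next ?fan_uniq.
by apply: contra xNn => /eqP <-; rewrite next_prev ?fan_uniq.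
Qed.

Lemma interior_deg x s : x \in interior V c a -> uniq s -> all (e x) s ->
  size s <= 2 + e x a.
Proof.
move=> xI us /allP sx.
pose nbs := [seq y <- [:: next c x; prev c x; a] | e x y].
apply: leq_trans (uniq_leq_size (s2 := nbs) us _) _.
  by move=> y ys; rewrite mem_filter sx // interior_adj // sx.
by rewrite size_filter /= addn0 addnA leq_add2r; case: (e x _); case: (e x _).
Qed.

Lemma interior_exit_corner x y : x \in interior V c a -> e x y ->
  y \notin interior V c a -> y != a -> e y a.
Proof.
move=> xI xy yNI ya; have uc := fan_uniq.
move: yNI; rewrite mem_interior (interior_adj_mem xI xy) ya /= negb_and !negbK.
case/orP=> /eqP->.
  by rewrite -[X in e _ X](prev_next uc a) fan_adj_prev ?mem_next ?fan_center.
by rewrite -[X in e _ X](next_prev uc a) fan_adj_next ?mem_prev ?fan_center.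
Qed.

Lemma interior_adj_corner w y : w \in c -> w \notin interior V c a -> w != a ->
  y \in interior V c a -> e y w -> y = corner_inner_nb c a w.
Proof.
move=> wc wNI wa yI /(interior_adj yI); rewrite !inE (negbTE wa) orbF.
have ya : y != a by move: yI; rewrite mem_interior => /and4P[].
have uc := fan_uniq; have npa := next_neq_prev uc fan_size fan_center.
move: wNI; rewrite mem_interior wc wa /= negb_and !negbK /corner_inner_nb.
case/orP=> /eqP wE /orP[] /eqP yE.
- by move: ya; rewrite -(prev_next uc y) -yE wE prev_next ?eqxx.
- by rewrite wE eqxx -wE yE next_prev.
- by rewrite wE eq_sym (negbTE npa) -wE yE prev_next.
- by move: ya; rewrite -(next_prev uc y) -yE wE next_prev ?eqxx.
Qed.

Lemma chord_at_center x y : chord eJ c x y ->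
  exists2 z, [set x; y] = [set a; z] & (z \in interior V c a) && e a z.
Proof.
case: hF => [[symJ [irrJ VJ]] [[[_ _ memV _] _] [_ chordP]] [VH [eH [_ _ _ eE]]]].
wlog -> : x y / x = a.
  move=> wlog_a xy; have /orP[/eqP xa | /eqP ya] := chordP _ _ xy; first exact: wlog_a.
  rewrite setUC; apply: wlog_a ya _; move: xy.
  by rewrite /chord /cedge symJ andbCA orbC.
case/andP=> ay nCay; exists y => //; rewrite eE ay orTb andbT mem_interior.
have yc : y \in c by rewrite memV; apply: (VJ y a); rewrite symJ.
move: nCay; rewrite /cedge yc fan_center /= negb_or => /andP[yNn aNn].
rewrite yNn /=; apply/andP; split.
  by apply: contraTneq ay => ->; rewrite irrJ.
by apply: contra aNn => /eqP->; rewrite next_prev ?fan_uniq.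
Qed.

Lemma fan_center_chords : 1 < fan_length eJ c -> exists z1 z2,
  [/\ z1 \in interior V c a, z2 \in interior V c a, e a z1, e a z2 & z1 != z2].
Proof.
case/card_gt1P=> X1 [X2 [/imsetP[[x1 y1] xy1 ->] /imsetP[[x2 y2] xy2 ->] X12]].
rewrite !inE /= in xy1 xy2.
have [z1 E1 /andP[z1I az1]] := chord_at_center xy1.
have [z2 E2 /andP[z2I az2]] := chord_at_center xy2.
by exists z1, z2; split=> //; apply: contraNneq X12 => z12; rewrite E1 E2 z12.
Qed.

Lemma fan_interior_path : exists p, [/\ uniq p, sorted e p, p =i interior V c a,
  head (prev c a) p = next c (next c a) & last (next c a) p = prev c (prev c a)].
Proof.
have uc := fan_uniq; case/rot_to: fan_center fan_size => i s hr.
have ucc : uniq (a :: s) by rewrite -hr rot_uniq.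
have cyc : cycle e (a :: s).
  by rewrite -hr rot_cycle; apply: cycle_from_next => // x; apply: fan_adj_next.
have memc x : (x \in c) = (x \in a :: s) by rewrite -(mem_rot i) hr.
have nxt := next_rot i uc; have prv := prev_rot i uc; rewrite hr in nxt prv.
rewrite -(size_rot i) hr {hr}; move: ucc cyc memc nxt prv.
case: s => [|n s] //; case/lastP: s => [|p pr] // ucc cyc memc nxt prv _.
have := cycle_next ucc; rewrite /= !rcons_path last_rcons.
case/andP=> _ /andP[/andP[np /eqP lp] /eqP pra].
have na : next c a = n by rewrite -nxt /= eqxx.
have pa : prev c a = pr by rewrite -prv -[X in prev _ X]pra prev_next.
move: (ucc) cyc; rewrite /= !inE !mem_rcons !inE !negb_or rcons_uniq.
case/and4P=> /and3P[_ _ aNp] /andP[_ nNp] pNp up.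
rewrite /= !rcons_path => /andP[_ /andP[/andP[/path_sorted sp _] _]].
exists p; split=> //.
- move=> z; rewrite mem_interior memc na pa !inE mem_rcons inE.
  have [zp|zNp] := boolP (z \in p); last by rewrite !orbF; case: eqP; case: eqP; case: eqP.
  by rewrite !orbT /=; apply/esym/and3P; split; apply: contraTneq zp => ->.
- rewrite pa na -nxt; case: (p) (np) (lp) => [_ lp0 | x q /andP[/eqP nx _] _].
    exact: esym lp0.
  exact: esym nx.
- by rewrite pa na -prv -[X in prev _ X]lp prev_next.
Qed.

Lemma corner_inner_nb_at_end p w : p =i interior V c a ->
  head (prev c a) p = next c (next c a) -> last (next c a) p = prev c (prev c a) ->
  w \notin interior V c a -> corner_inner_nb c a w \in p ->
  at_end p (corner_inner_nb c a w).
Proof.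
move=> memp hd tl wNI up.
have head_p x : head x p = head (prev c a) p by case: (p) up.
have last_p x : last x p = last (next c a) p.
  by case/lastP: (p) up => // q y; rewrite !last_rcons.
rewrite /at_end head_p last_p hd tl.
have wc : w \in c.
  move: up; rewrite memp => /interior_mem.
  by rewrite /corner_inner_nb; case: ifP; rewrite ?mem_next ?mem_prev.
move: up wNI; rewrite memp !mem_interior wc /corner_inner_nb /= negb_and !negbK.
case: eqP => [-> _ _|_ /and4P[_ _ _ uNp] /orP[/eqP wa|/negPn/eqP->]]; first by rewrite eqxx.
  by rewrite wa eqxx in uNp.
by rewrite eqxx orbT.
Qed.

End Fan.

Section TwoFans.
Variables (T : finType) (e : rel T).
Hypothesis e_sym : symmetric e.
Variables (V1 : {set T}) (e1 : rel T) (c1 : seq T) (a1 : T).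
Variables (V2 : {set T}) (e2 : rel T) (c2 : seq T) (a2 : T).
Hypotheses (hF1 : fan_of e V1 e1 c1 a1) (hF2 : fan_of e V2 e2 c2 a2).
Local Notation Q1 := (interior V1 c1 a1).
Local Notation Q2 := (interior V2 c2 a2).

Lemma center_not_interior : 1 < fan_length e1 c1 -> a1 \notin Q2.
Proof.
(* a1 has four distinct neighbours, an interior vertex of F2 at most three *)
case/(fan_center_chords hF1)=> z1 [z2 [z1I z2I az1 az2 z12]]; apply/negP => a1I.
have := interior_deg hF2 a1I (s := [:: next c1 a1; prev c1 a1; z1; z2]).
rewrite /= (fan_adj_next hF1) ?(fan_adj_prev hF1) ?(fan_center hF1) // az1 az2.
rewrite !inE !negb_or.
move: z1I z2I; rewrite !(mem_interior hF1) => /and4P[_ _ z1n z1p] /and4P[_ _ z2n z2p].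
rewrite next_neq_prev ?(fan_uniq hF1) ?(fan_size hF1) ?(fan_center hF1) //.
rewrite ![next c1 a1 == _]eq_sym ![prev c1 a1 == _]eq_sym z1n z1p z2n z2p z12.
by move=> /(_ isT isT); case: (e a1 a2).
Qed.

Lemma common_interior_adj t : t \in Q1 -> t \in Q2 -> e t a2 -> e t a1.
Proof.
move=> tI1 tI2 ta2; have tc2 := interior_mem hF2 tI2.
have := interior_deg hF1 tI1 (interior_nb_uniq hF2 tI2).
by rewrite /= (fan_adj_next hF2) ?(fan_adj_prev hF2) ?ta2 // => /(_ isT); case: (e t a1).
Qed.

Section DistinctCenters.
Hypotheses (a12 : a1 != a2) (a1NQ2 : a1 \notin Q2).
Variable v : T.
Hypotheses (vI1 : v \in Q1) (vI2 : v \in Q2).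
Local Notation w := (corner_inner_nb c2 a2 a1).

Lemma adj_center1_eq y : y \in Q2 -> e y a1 -> y = w.
Proof.
move=> yI ya1.
exact: (interior_adj_corner hF2 (interior_adj_mem hF2 yI ya1) a1NQ2 a12 yI ya1).
Qed.

Lemma exit_interior1_eq x y : x \in Q1 -> y \in Q2 -> y \notin Q1 -> e x y -> y = w.
Proof.
move=> xI1 yI2 yNI1 xy; apply: (adj_center1_eq yI2).
by apply: (interior_exit_corner hF1 xI1 xy yNI1); apply: contraNneq a1NQ2 => <-.
Qed.

Lemma notin_interior1_eq z : z \in Q2 -> z \notin Q1 -> z = w.
Proof.
(* Along the interior path of F2 through v, Q1 can only be left at w. *)
move=> zI2 zNI1.
have [p [up sp memp hd tl]] := fan_interior_path hF2.
pose r := [rel x y | [&& e x y, x \in Q2 & y \in Q2]].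
apply: (@sorted_exit_at _ r (mem Q1) w _ _ p) => //; last by rewrite memp.
- by move=> x y /=; rewrite e_sym; case: (x \in Q2); case: (y \in Q2); rewrite ?andbF.
- by move=> x y /and3P[xy _ yI2] xI1 yNI1; apply: (exit_interior1_eq xI1 yI2 yNI1 xy).
- apply: (@sub_in_sorted _ (mem Q2) e) sp => [x y xI yI xy|]; first by rewrite /= xy xI yI.
  by apply/allP => x; rewrite memp.
- by apply/hasP; exists v; rewrite ?memp.
- exact: (corner_inner_nb_at_end hF2 memp hd tl a1NQ2).
Qed.

Lemma chord_end2_eq z : z \in Q2 -> e a2 z -> z = w.
Proof.
move=> zI2 a2z; have [zI1|zNI1] := boolP (z \in Q1).
  by apply: (adj_center1_eq zI2); apply: (common_interior_adj zI1 zI2); rewrite e_sym.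
exact: notin_interior1_eq zI2 zNI1.
Qed.

End DistinctCenters.
End TwoFans.

Theorem mainTheorem15 (T : finType) (e : rel T)
  (e_sym : symmetric e) (e_irr : irreflexive e)
  (hG : internally_3_connected e)
  (V1 : {set T}) (e1 : rel T) (c1 : seq T) (a1 : T)
  (V2 : {set T}) (e2 : rel T) (c2 : seq T) (a2 : T)
  (hF1 : nontrivial_fan_of e V1 e1 c1 a1)
  (hF2 : nontrivial_fan_of e V2 e2 c2 a2)
  (hcommon : exists v, v \in interior V1 c1 a1 :&: interior V2 c2 a2) :
  a1 = a2.
Proof.
case: hF1 hF2 hcommon => [hf1 long1] [hf2 long2] [v]; rewrite inE => /andP[vI1 vI2].
apply/eqP/negPn/negP => a12.
have a1NQ2 := center_not_interior hf1 hf2 long1.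
have [z1 [z2 [z1I z2I az1 az2 z12]]] := fan_center_chords hf2 long2.
have chord_end := chord_end2_eq e_sym hf1 hf2 a12 a1NQ2 vI1 vI2.
by move: z12; rewrite (chord_end _ z1I az1) (chord_end _ z2I az2) eqxx.
Qed.
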